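(* Let $\beta>0$ and $k<0$. Let \[f_{+-}(x,y,z)=\beta(x^2y^2+y^2z^2+x^2z^2)+\Big(x^2+y^2+z^2-\tfrac12\Big)^2-\tfrac{1-k}{4}.\] Then the zero set $Q^{+-}(k)=\{(x,y,z)\in\mathbb{R}^3: f_{+-}(x,y,z)=0\}$ is a connected compact surface homeomorphic to a sphere.
   Context: $Q^{+-}(k)$ is an octahedral quartic, i.e. $f_{+-}$ is invariant under the group of $3\times 3$ signed permutation matrices. *)

From HB Require Import structures.
From mathcomp Require Import all_boot all_order all_algebra.
From mathcomp Require Import all_classical all_reals all_analysis.
Set Implicit Arguments. Unset Strict Implicit. Unset Printing Implicit Defensive.
Import Order.TTheory GRing.Theory Num.Theory.
Import numFieldNormedType.Exports.
Local Open Scope classical_set_scope.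
Local Open Scope ring_scope.

Definition cx {R : realType} (v : 'rV[R]_3) : R := v ord0 (@Ordinal 3 0 isT).
Definition cy {R : realType} (v : 'rV[R]_3) : R := v ord0 (@Ordinal 3 1 isT).
Definition cz {R : realType} (v : 'rV[R]_3) : R := v ord0 (@Ordinal 3 2 isT).

Definition fpm {R : realType} (beta k : R) (v : 'rV[R]_3) : R :=
  let x := cx v in let y := cy v in let z := cz v in
  beta * (x^+2 * y^+2 + y^+2 * z^+2 + x^+2 * z^+2)
  + (x^+2 + y^+2 + z^+2 - 2^-1) ^+ 2 - (1 - k) / 4.

Definition Qpm {R : realType} (beta k : R) : set 'rV[R]_3 :=
  [set v | fpm beta k v = 0].

Definition sphere2 (R : realType) : set 'rV[R]_3 :=
  [set v | cx v ^+ 2 + cy v ^+ 2 + cz v ^+ 2 = 1].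

Definition homeomorphic_sets {T U : topologicalType} (A : set T) (B : set U) : Prop :=
  exists (f : T -> U) (g : U -> T),
    [/\ {within A, continuous f}, {within B, continuous g},
        f @` A `<=` B, g @` B `<=` A &
        (forall a, A a -> g (f a) = a) /\ (forall b, B b -> f (g b) = b)].

From HB Require Import structures.
From mathcomp Require Import all_boot all_order all_algebra.
From mathcomp Require Import all_classical all_reals all_analysis.
From mathcomp Require Import ring lra.
Import Order.TTheory GRing.Theory Num.Theory.
Import numFieldNormedType.Exports.
Local Open Scope classical_set_scope.
Local Open Scope ring_scope.

Set Implicit Arguments.
Unset Strict Implicit.
Unset Printing Implicit Defensive.

(* Write [f_{+-}(v) = A(v) - |v|^2 + k/4] with [A] a quartic form that is positive off the
   origin. On the ray through a unit vector [u], [f_{+-}(sqrt s * u) = A(u) s^2 - s + k/4]: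
   a quadratic in [s] whose roots have product [k / (4 A(u)) < 0], hence exactly one
   positive root, depending continuously on [u]. So radial projection is a homeomorphism
   from the level set onto the unit sphere, which carries compactness and connectedness
   over. The sphere is connected since the projected segment from any point [u] to the
   north pole avoids the origin unless [u] is the south pole, which is first joined to an
   equatorial point. *)

Section PositiveRoot.
Variable R : rcfType.
Implicit Types a b c t : R.

Definition pos_root a b c := (b + Num.sqrt (b ^+ 2 - 4 * a * c)) / (2 * a).

Variables (a c : R).
Hypotheses (a_gt0 : 0 < a) (c_lt0 : c < 0).

Lemma discriminant_gt_sqr b : b ^+ 2 < b ^+ 2 - 4 * a * c.
Proof. have : a * c < 0 by rewrite pmulr_rlt0. lra. Qed.

Lemma pos_root_gt0 b : 0 < pos_root a b c.
Proof.
have disc_gt0 : 0 < b ^+ 2 - 4 * a * c := le_lt_trans (sqr_ge0 b) (discriminant_gt_sqr b).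
have lt_sqrt : `|b| < Num.sqrt (b ^+ 2 - 4 * a * c).
  by rewrite -sqrtr_sqr ltr_sqrt ?discriminant_gt_sqr.
have neg_b_le : - b <= `|b| by rewrite -normrN ler_norm.
by rewrite divr_gt0 ?mulr_gt0 //; lra.
Qed.

Lemma pos_root_root b : a * pos_root a b c ^+ 2 - b * pos_root a b c + c = 0.
Proof.
have disc_ge0 : 0 <= b ^+ 2 - 4 * a * c.
  exact: le_trans (sqr_ge0 b) (ltW (discriminant_gt_sqr b)).
rewrite /pos_root; move: (sqr_sqrtr disc_ge0); set s := Num.sqrt _ => s2.
have a_neq0 : a != 0 by rewrite gt_eqF.
rewrite (_ : _ - _ + _ = (s ^+ 2 - (b ^+ 2 - 4 * a * c)) / (4 * a)); last by field.
by rewrite s2 subrr mul0r.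
Qed.

(* A second positive root [t] would give [a (t + r) = b], whence [c = a r t > 0]. *)
Lemma pos_root_unique b t : 0 < t -> a * t ^+ 2 - b * t + c = 0 -> t = pos_root a b c.
Proof.
move=> t_gt0 t_root; have r_gt0 := pos_root_gt0 b; have r_root := pos_root_root b.
set r := pos_root a b c in r_gt0 r_root *.
have : (t - r) * (a * (t + r) - b) = 0 by nra.
move/eqP; rewrite mulf_eq0 subr_eq0 => /orP[/eqP // | /eqP sum_eq].
have art_gt0 : 0 < a * r * t by rewrite mulr_gt0 // mulr_gt0.
have root_eq : a * t ^+ 2 - b * t = - (a * r * t).
  by rewrite (_ : b = a * (t + r)); [ring | lra].
have c_eq : c = a * r * t by lra.
by move: c_lt0; rewrite c_eq ltNge (ltW art_gt0).
Qed.

End PositiveRoot.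

Lemma pos_root_continuous (R : realType) (a b c : R) : a != 0 ->
  {for a, continuous (fun x => pos_root x b c)}.
Proof.
move=> a_neq0; rewrite /pos_root; apply: continuousM.
  apply: continuousD; first exact: cst_continuous.
  apply: continuous_comp; last exact: sqrt_continuous.
  apply: continuousB; first exact: cst_continuous.
  apply: continuousM; last exact: cst_continuous.
  by apply: continuousM; [exact: cst_continuous | exact: cvg_id].
apply: continuousV; first by rewrite mulf_neq0 ?pnatr_eq0.
by apply: continuousM; [exact: cst_continuous | exact: cvg_id].
Qed.

Definition sqnorm3 {R : realType} (v : 'rV[R]_3) : R := cx v ^+ 2 + cy v ^+ 2 + cz v ^+ 2.

Definition normalize {R : realType} (v : 'rV[R]_3) : 'rV[R]_3 :=
  (Num.sqrt (sqnorm3 v))^-1 *: v.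

Section Sphere.
Variable R : realType.
Implicit Types (u v w : 'rV[R]_3) (l t : R).

Lemma sqnorm3E v : sqnorm3 v = \sum_(j < 3) v ord0 j ^+ 2.
Proof.
rewrite !big_ord_recr big_ord0 /= add0r /sqnorm3 /cx /cy /cz.
by congr (_ + _ + _); congr (_ ^+ _); congr (v _ _); apply: val_inj.
Qed.

Lemma sqnorm3_ge0 v : 0 <= sqnorm3 v.
Proof. by rewrite sqnorm3E sumr_ge0 // => j _; rewrite sqr_ge0. Qed.

Lemma sqnorm3Z l v : sqnorm3 (l *: v) = l ^+ 2 * sqnorm3 v.
Proof. by rewrite /sqnorm3 /cx /cy /cz !mxE; ring. Qed.

Lemma sqnorm3N v : sqnorm3 (- v) = sqnorm3 v.
Proof. by rewrite -scaleN1r sqnorm3Z sqrrN expr1n mul1r. Qed.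

Lemma sqnorm3_eq0 v : (sqnorm3 v == 0) = (v == 0).
Proof.
apply/eqP/eqP => [|->]; last by rewrite sqnorm3E big1 // => j _; rewrite mxE expr0n.
rewrite sqnorm3E => /psumr_eq0P sum_eq0; apply/rowP => j.
by apply/eqP; rewrite mxE -sqrf_eq0 sum_eq0 // => i _; rewrite sqr_ge0.
Qed.

Lemma sqnorm3_gt0 v : (0 < sqnorm3 v) = (v != 0).
Proof. by rewrite lt_def sqnorm3_eq0 sqnorm3_ge0 andbT. Qed.

Lemma sqr_entry_le_sqnorm3 v j : v ord0 j ^+ 2 <= sqnorm3 v.
Proof.
rewrite sqnorm3E (bigD1 j) //= lerDl.
by rewrite sumr_ge0 // => i _; rewrite sqr_ge0.
Qed.

Lemma sqr_coord_continuous j : continuous (fun v : 'rV[R]_3 => v ord0 j ^+ 2).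
Proof.
by move=> v; exact: continuous_comp (@coord_continuous R 1 3 ord0 j v) (@exprn_continuous R 2 _).
Qed.

Lemma sqnorm3_continuous : continuous (@sqnorm3 R).
Proof.
move=> v; have sqr_at j := @sqr_coord_continuous j v.
exact: continuousD (continuousD (sqr_at _) (sqr_at _)) (sqr_at _).
Qed.

Lemma sphere2E u : sphere2 u = (sqnorm3 u = 1).
Proof. by []. Qed.

Lemma sqnorm3_normalize v : v != 0 -> sqnorm3 (normalize v) = 1.
Proof.
rewrite -sqnorm3_gt0 => v_gt0.
by rewrite sqnorm3Z exprVn sqr_sqrtr ?ltW // mulVf // gt_eqF.
Qed.

Lemma normalize_id u : sphere2 u -> normalize u = u.
Proof. by rewrite sphere2E /normalize => ->; rewrite sqrtr1 invr1 scale1r. Qed.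

Lemma normalize_continuous v : v != 0 -> {for v, continuous (@normalize R)}.
Proof.
move=> v_neq0; apply: continuousZ; last exact: cvg_id.
apply: continuousV; first by rewrite gt_eqF // sqrtr_gt0 sqnorm3_gt0.
by apply: continuous_comp; [exact: sqnorm3_continuous | exact: sqrt_continuous].
Qed.

Lemma sphere2_neq0 u : sphere2 u -> u != 0.
Proof. by rewrite sphere2E -sqnorm3_gt0 => ->. Qed.

Lemma normalizeZ l v : 0 < l -> normalize (l *: v) = normalize v.
Proof.
move=> l_gt0; rewrite /normalize sqnorm3Z sqrtrM ?sqr_ge0 // sqrtr_sqr gtr0_norm //.
by rewrite scalerA invfM mulrAC mulVf ?gt_eqF // mul1r.
Qed.

Lemma sphere2_bounded : bounded_set (@sphere2 R).
Proof.
rewrite /= /bounded_near; near=> M => u /= u1.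
apply: le_trans (_ : 1 <= M); last by near: M; apply: nbhs_pinfty_ge.
rewrite [leLHS]/Num.norm /= mx_normrE; apply: bigmax_le => // -[i j] _ /=.
rewrite (ord1 i) -(@expr_le1 _ 2) // real_normK ?num_real // -[leRHS]u1.
exact: sqr_entry_le_sqnorm3.
Unshelve. all: by end_near.
Qed.

Lemma sphere2_closed : closed (@sphere2 R).
Proof.
apply: (@preimage_closed _ _ (@sqnorm3 R) [set 1]); last exact: closed_eq.
by move=> v _; exact: sqnorm3_continuous.
Qed.

Lemma sphere2_compact : compact (@sphere2 R).
Proof. exact: bounded_closed_compact sphere2_bounded sphere2_closed. Qed.

Definition interp u v t : 'rV[R]_3 := (1 - t) *: u + t *: v.

Lemma interp_neq0 u v t : sphere2 u -> sphere2 v -> u != - v -> interp u v t != 0.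
Proof.
rewrite !sphere2E => u1 v1; apply: contra_neq => /eqP; rewrite addr_eq0 => /eqP uv_eq.
have t_half : t = 2^-1.
  by move: (congr1 sqnorm3 uv_eq); rewrite sqnorm3N !sqnorm3Z u1 v1; lra.
move: uv_eq; rewrite t_half (_ : 1 - 2^-1 = 2^-1 :> R); last lra.
by rewrite -scalerN => /scalerI ->; rewrite ?invr_eq0 ?pnatr_eq0.
Qed.

Definition arc u v := [set normalize (interp u v t) | t in `[0, 1]].

Lemma arc_sub_sphere u v : sphere2 u -> sphere2 v -> u != - v -> arc u v `<=` @sphere2 R.
Proof. by move=> u1 v1 uv _ [t _ <-]; apply: sqnorm3_normalize; apply: interp_neq0. Qed.

Lemma arc_start u v : sphere2 u -> arc u v u.
Proof.
move=> u1; exists 0; first by rewrite /= in_itv /= lexx ler01.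
by rewrite /interp subr0 scale1r scale0r addr0 normalize_id.
Qed.

Lemma arc_end u v : sphere2 v -> arc u v v.
Proof.
move=> v1; exists 1; first by rewrite /= in_itv /= lexx ler01.
by rewrite /interp subrr scale0r scale1r add0r normalize_id.
Qed.

Lemma arc_connected u v : sphere2 u -> sphere2 v -> u != - v -> connected (arc u v).
Proof.
move=> u1 v1 uv; apply: connected_continuous_connected; first exact: segment_connected.
apply: continuous_in_subspaceT => t _; apply: continuous_comp.
  apply: continuousD; apply: continuousZr_tmp; last exact: cvg_id.
  by apply: continuousB; [exact: cst_continuous | exact: cvg_id].
exact/normalize_continuous/interp_neq0.
Qed.

Let e1 : 'rV[R]_3 := \row_(j < 3) (j == 0 :> nat)%:R.
Let e3 : 'rV[R]_3 := \row_(j < 3) (j == 2 :> nat)%:R.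

Lemma e1_sphere : sphere2 e1. Proof. by rewrite sphere2E /sqnorm3 /cx /cy /cz !mxE /=; lra. Qed.
Lemma e3_sphere : sphere2 e3. Proof. by rewrite sphere2E /sqnorm3 /cx /cy /cz !mxE /=; lra. Qed.

Lemma e3_neq_antipode : e3 != - e3.
Proof. by apply/eqP => /(congr1 (@cz R)); rewrite /e3 /cz !mxE /=; lra. Qed.

Lemma e1_neq_antipode_e3 : e1 != - e3.
Proof. by apply/eqP => /(congr1 (@cx R)); rewrite /e1 /e3 /cx !mxE /=; lra. Qed.

Lemma antipode_e3_neq_antipode_e1 : - e3 != - e1.
Proof. by apply/eqP => /(congr1 (@cx R)); rewrite /e1 /e3 /cx !mxE /=; lra. Qed.

(* The antipode of [e3] is joined to [e3] through [e1], every other point directly. *)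
Let pivot u := if u == - e3 then e1 else e3.

Let chain u := arc u (pivot u) `|` arc (pivot u) e3.

Lemma pivot_sphere u : sphere2 (pivot u).
Proof. by rewrite /pivot; case: ifP => _; [exact: e1_sphere | exact: e3_sphere]. Qed.

Lemma pivot_neq_antipode u : u != - pivot u /\ pivot u != - e3.
Proof.
rewrite /pivot; case: ifPn => [/eqP ->|u_neq]; last by split=> //; exact: e3_neq_antipode.
by split; [exact: antipode_e3_neq_antipode_e1 | exact: e1_neq_antipode_e3].
Qed.

Lemma chain_sub_sphere u : sphere2 u -> chain u `<=` @sphere2 R.
Proof.
move=> u1; have [u_piv piv_e3] := pivot_neq_antipode u.
have piv1 := pivot_sphere u; have e3_1 := e3_sphere.
by rewrite subUset; split; apply: arc_sub_sphere.
Qed.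

Lemma chain_connected u : sphere2 u -> connected (chain u).
Proof.
move=> u1; have [u_piv piv_e3] := pivot_neq_antipode u; have piv1 := pivot_sphere u.
apply: connectedU; last by apply: arc_connected => //; exact: e3_sphere.
  by exists (pivot u); split; [exact: arc_end | exact: arc_start].
exact: arc_connected.
Qed.

Lemma sphere2_connected : connected (@sphere2 R).
Proof.
have -> : @sphere2 R = \bigcup_(u in @sphere2 R) chain u.
  apply/seteqP; split=> [u u1 | w [u u1]]; last exact: chain_sub_sphere.
  by exists u => //; left; exact: arc_start.
apply: bigcup_connected; last exact: chain_connected.
by exists e3 => u _; right; exact/arc_end/e3_sphere.
Qed.

End Sphere.

Section RadialLevelSet.
Variables (R : realType) (A : 'rV[R]_3 -> R) (c : R).
Hypothesis A_homog : forall l v, A (l *: v) = l ^+ 4 * A v.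
Hypothesis A_gt0 : forall v, v != 0 -> 0 < A v.
Hypothesis A_continuous : continuous A.
Hypothesis c_lt0 : c < 0.

Definition level_set := [set v | A v - sqnorm3 v + c = 0].

Definition radial_lift u := Num.sqrt (pos_root (A u) 1 c) *: u.

Lemma level_set_neq0 v : level_set v -> v != 0.
Proof.
rewrite /level_set /=; apply: contra_eqN => /eqP ->.
by rewrite -(scale0r (0 : 'rV[R]_3)) A_homog sqnorm3Z !expr0n /= !mul0r subr0 add0r lt_eqF.
Qed.

Lemma radial_lift_level u : sphere2 u -> level_set (radial_lift u).
Proof.
move=> u1; have Au_gt0 := A_gt0 (sphere2_neq0 u1); have n_u : sqnorm3 u = 1 by [].
rewrite /level_set /= /radial_lift A_homog sqnorm3Z (_ : 4 = 2 * 2)%N // exprM.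
rewrite sqr_sqrtr ?n_u; last exact/ltW/pos_root_gt0.
by rewrite -(pos_root_root Au_gt0 c_lt0 1); ring.
Qed.

Lemma normalize_radial_lift u : sphere2 u -> normalize (radial_lift u) = u.
Proof.
move=> u1; rewrite normalizeZ ?normalize_id // sqrtr_gt0.
exact: pos_root_gt0 (A_gt0 (sphere2_neq0 u1)) c_lt0 1.
Qed.

Lemma radial_lift_normalize v : level_set v -> radial_lift (normalize v) = v.
Proof.
move=> v_lev; have v_neq0 := level_set_neq0 v_lev.
have n_gt0 : 0 < sqnorm3 v by rewrite sqnorm3_gt0.
set s := Num.sqrt (sqnorm3 v).
have s_gt0 : 0 < s by rewrite sqrtr_gt0.
have s2 : s ^+ 2 = sqnorm3 v by rewrite sqr_sqrtr ?ltW.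
rewrite /radial_lift; suff -> : pos_root (A (normalize v)) 1 c = sqnorm3 v.
  by rewrite /normalize -/s scalerA mulfV ?gt_eqF ?scale1r.
symmetry; apply: pos_root_unique => //.
- exact/A_gt0/sphere2_neq0/sqnorm3_normalize.
- rewrite /normalize -/s A_homog exprVn (_ : 4 = 2 * 2)%N // exprM s2.
  move: v_lev; rewrite /level_set /= => v_lev.
  by rewrite -[RHS]v_lev; field; rewrite gt_eqF.
Qed.

Lemma radial_lift_continuous u : sphere2 u -> {for u, continuous radial_lift}.
Proof.
move=> u1; have Au_neq0 : A u != 0 by rewrite gt_eqF // A_gt0 // sphere2_neq0.
apply: continuousZ; last exact: cvg_id.
apply: continuous_comp; last exact: sqrt_continuous.
exact: continuous_comp (@A_continuous u) (pos_root_continuous (b := 1) (c := c) Au_neq0).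
Qed.

Lemma level_set_image : level_set = radial_lift @` @sphere2 R.
Proof.
apply/seteqP; split=> [v v_lev | _ [u u1 <-]]; last exact: radial_lift_level.
exists (normalize v); last exact: radial_lift_normalize.
exact/sqnorm3_normalize/level_set_neq0.
Qed.

Lemma radial_lift_within_continuous : {within @sphere2 R, continuous radial_lift}.
Proof. by apply: continuous_in_subspaceT => u; rewrite inE => /radial_lift_continuous. Qed.

Lemma level_set_compact : compact level_set.
Proof.
rewrite level_set_image.
exact: continuous_compact radial_lift_within_continuous (@sphere2_compact R).
Qed.

Lemma level_set_connected : connected level_set.
Proof.
rewrite level_set_image.
exact: connected_continuous_connected (@sphere2_connected R) radial_lift_within_continuous.
Qed.

Lemma sphere2_homeomorphic_level_set : homeomorphic_sets (@sphere2 R) level_set.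
Proof.
exists radial_lift, normalize; split.
- exact: radial_lift_within_continuous.
- apply: continuous_in_subspaceT => v; rewrite inE => /level_set_neq0.
  exact: normalize_continuous.
- by move=> _ [u u1 <-]; exact: radial_lift_level.
- by move=> _ [v /level_set_neq0 v_neq0 <-]; exact: sqnorm3_normalize.
- split; [exact: normalize_radial_lift | exact: radial_lift_normalize].
Qed.

End RadialLevelSet.

Definition octahedral_quartic {R : realType} (beta : R) (v : 'rV[R]_3) : R :=
  beta * (cx v ^+ 2 * cy v ^+ 2 + cy v ^+ 2 * cz v ^+ 2 + cx v ^+ 2 * cz v ^+ 2)
  + sqnorm3 v ^+ 2.

Section OctahedralQuartic.
Variables (R : realType) (beta : R).
Hypothesis beta_ge0 : 0 <= beta.

Lemma octahedral_quarticZ l v :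
  octahedral_quartic beta (l *: v) = l ^+ 4 * octahedral_quartic beta v.
Proof. by rewrite /octahedral_quartic sqnorm3Z /cx /cy /cz !mxE; ring. Qed.

Lemma octahedral_quartic_gt0 v : v != 0 -> 0 < octahedral_quartic beta v.
Proof.
rewrite -sqnorm3_gt0 => n_gt0; rewrite ltr_wpDl ?exprn_gt0 // mulr_ge0 //.
by rewrite !addr_ge0 // mulr_ge0 // sqr_ge0.
Qed.

Lemma octahedral_quartic_continuous : continuous (octahedral_quartic beta).
Proof.
move=> v; have sq j := @sqr_coord_continuous R j v.
have x := sq (@Ordinal 3 0 isT); have y := sq (@Ordinal 3 1 isT).
have z := sq (@Ordinal 3 2 isT).
have mixed := continuousD (continuousD (continuousM x y) (continuousM y z)) (continuousM x z).
exact: continuousD (continuousM (@cst_continuous _ _ beta v) mixed)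
  (continuous_comp (@sqnorm3_continuous R v) (@exprn_continuous R 2 _)).
Qed.

End OctahedralQuartic.

Lemma Qpm_level_set (R : realType) (beta k : R) :
  Qpm beta k = level_set (octahedral_quartic beta) (k / 4).
Proof.
apply/funext => v; rewrite /Qpm /level_set /=.
by congr (_ = 0); rewrite /fpm /octahedral_quartic /sqnorm3 /=; field.
Qed.

Theorem lemma2 (R : realType) (beta k : R) :
  0 < beta -> k < 0 ->
  [/\ compact (Qpm beta k), connected (Qpm beta k) &
      homeomorphic_sets (@sphere2 R) (Qpm beta k)].
Proof.
move=> beta_gt0 k_lt0; have c_lt0 : k / 4 < 0 by rewrite pmulr_llt0.
have homog := octahedral_quarticZ beta.
have pos := octahedral_quartic_gt0 (ltW beta_gt0).
have cont := @octahedral_quartic_continuous R beta.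
rewrite Qpm_level_set; split.
- exact: level_set_compact homog pos cont c_lt0.
- exact: level_set_connected homog pos cont c_lt0.
- exact: sphere2_homeomorphic_level_set homog pos cont c_lt0.
Qed.
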